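(* There is no sequence of maps $\varphi_0,\varphi_1,\varphi_2,\ldots$, each defined on the ideal $\mathcal{M}$ of meager subsets of $\mathbb{R}$ and taking values in the family of closed nowhere dense subsets of $\mathbb{R}$, such that both of the following hold: (a) $A\subseteq\bigcup_{i<\omega}\varphi_i(A)$ for every meager $A\subseteq\mathbb{R}$; (b) $\varphi_i(A+r)=\varphi_i(A)+r$ for every meager $A$, every $r\in\mathbb{R}$ and every $i<\omega$.
   Context: $A+r=\{a+r:a\in A\}$. *)

From Stdlib Require Export Reals.
Open Scope R_scope.

Definition is_open (U : R -> Prop) : Prop :=
  forall x, U x -> exists eps, 0 < eps /\ forall y, Rabs (y - x) < eps -> U y.

Definition is_closed (F : R -> Prop) : Prop :=
  is_open (fun x => ~ F x).

Definition closure (A : R -> Prop) : R -> Prop :=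
  fun x => forall eps, 0 < eps -> exists y, A y /\ Rabs (y - x) < eps.

Definition nowhere_dense (A : R -> Prop) : Prop :=
  ~ exists U : R -> Prop, is_open U /\ (exists x, U x) /\
      (forall x, U x -> closure A x).

Definition meager (A : R -> Prop) : Prop :=
  exists N : nat -> R -> Prop, (forall n, nowhere_dense (N n)) /\
    (forall x, A x -> exists n, N n x).

Definition translate (A : R -> Prop) (r : R) : R -> Prop :=
  fun y => exists a, A a /\ y = a + r.

From Stdlib Require Import Reals.
From Stdlib Require Import Lra Lia ZArith Cantor FunctionalExtensionality PropExtensionality.
Open Scope R_scope.

(* The set Q of rationals is meager (it is countable and points
   are nowhere dense), and Q + q = Q for every rational q.  Given maps phi_i
   as in the statement, some phi_i(Q) contains 0 by (a).  Translation
   equivariance (b) applied to A = Q and r = q gives phi_i(Q) = phi_i(Q) + q,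
   so phi_i(Q) contains every rational q.  Hence phi_i(Q) is dense in R,
   contradicting the requirement that it be nowhere dense. *)

Lemma dense_not_nowhere_dense (A : R -> Prop) :
  (forall x, closure A x) -> ~ nowhere_dense A.
Proof.
  intros Hdense Hnd. apply Hnd.
  exists (fun _ => True). split; [|split].
  - intros x _. exists 1. split; [lra | auto].
  - now exists 0.
  - intros x _. apply Hdense.
Qed.

Lemma closure_singleton (c y : R) : closure (fun x => x = c) y -> y = c.
Proof.
  intros Hcl. destruct (Req_dec y c) as [|Hne]; [assumption|].
  destruct (Hcl (Rabs (y - c))) as [y' [-> Hy']].
  - apply Rabs_pos_lt. lra.
  - rewrite <- Rabs_Ropp in Hy'.
    replace (- (c - y)) with (y - c) in Hy' by ring. lra.
Qed.

(* Points are nowhere dense: a nonempty open set contains two distinct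
   points, so it cannot lie in the closure {c} of {c}. *)
Lemma singleton_nowhere_dense (c : R) : nowhere_dense (fun x => x = c).
Proof.
  intros [U [HU [[x0 Hx0] Hsub]]].
  destruct (HU x0 Hx0) as [eps [Heps Hball]].
  assert (Hshift : U (x0 + eps / 2)) by (apply Hball; rewrite Rabs_right; lra).
  apply Hsub, closure_singleton in Hshift.
  apply Hsub, closure_singleton in Hx0. lra.
Qed.

Lemma enumerable_meager (f : nat -> R) (A : R -> Prop) :
  (forall x, A x -> exists k, x = f k) -> meager A.
Proof.
  intros Henum. exists (fun k x => x = f k). split.
  - intro k. apply singleton_nowhere_dense.
  - exact Henum.
Qed.

Definition rational (x : R) : Prop := exists (z : Z) (n : nat), x = IZR z / INR (S n).

Lemma INR_S_pos (n : nat) : 0 < INR (S n).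
Proof. apply lt_0_INR; lia. Qed.

Lemma rational_0 : rational 0.
Proof. exists 0%Z, 0%nat. simpl. field. Qed.

Lemma rational_add (x y : R) : rational x -> rational y -> rational (x + y).
Proof.
  intros [z1 [n1 ->]] [z2 [n2 ->]].
  exists (z1 * Z.of_nat (S n2) + z2 * Z.of_nat (S n1))%Z, (n1 * n2 + n1 + n2)%nat.
  replace (S (n1 * n2 + n1 + n2)) with (S n1 * S n2)%nat by lia.
  rewrite plus_IZR, !mult_IZR, <- !INR_IZR_INZ, mult_INR.
  pose proof (INR_S_pos n1); pose proof (INR_S_pos n2).
  field; lra.
Qed.

Lemma rational_opp (x : R) : rational x -> rational (- x).
Proof.
  intros [z [n ->]]. exists (- z)%Z, n. rewrite opp_IZR.
  pose proof (INR_S_pos n). field; lra.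
Qed.

(* Since the rationals form an additive subgroup, Q + t = Q for rational t. *)
Lemma translate_rational (t : R) : rational t -> translate rational t = rational.
Proof.
  intros Ht. apply functional_extensionality; intro y.
  apply propositional_extensionality; split.
  - intros [a [Ha ->]]. now apply rational_add.
  - intros Hy. exists (y - t). split; [|ring].
    now apply rational_add; [|apply rational_opp].
Qed.

(* An enumeration of the rationals: k codes a triple (a, b, n) via the Cantor
   pairing, standing for (a - b) / (n + 1). *)
Definition rational_enum (k : nat) : R :=
  let (p, n) := Cantor.of_nat k in
  let (a, b) := Cantor.of_nat p in IZR (Z.of_nat a - Z.of_nat b) / INR (S n).

Lemma rational_meager : meager rational.
Proof.
  apply (enumerable_meager rational_enum).
  intros x [z [n ->]].
  exists (Cantor.to_nat (Cantor.to_nat (Z.to_nat z, Z.to_nat (- z)), n)).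
  unfold rational_enum. rewrite !Cantor.cancel_of_to.
  do 2 f_equal. lia.
Qed.

(* Archimedean density: within eps of any y there is a rational, namely
   up(y (n+1)) / (n+1) for n with 1 / (n+1) < eps. *)
Lemma rational_dense (y eps : R) : 0 < eps -> exists q, rational q /\ Rabs (q - y) < eps.
Proof.
  intros Heps.
  destruct (INR_unbounded (/ eps)) as [n Hn].
  pose proof (INR_S_pos n) as Hpos.
  assert (Hsmall : / INR (S n) < eps).
  { rewrite <- (Rinv_inv eps). apply Rinv_lt_contravar.
    - apply Rmult_lt_0_compat; [now apply Rinv_0_lt_compat | lra].
    - rewrite S_INR. lra. }
  destruct (archimed (y * INR (S n))) as [Hup1 Hup2].
  set (u := IZR (up (y * INR (S n)))) in *.
  exists (u / INR (S n)). split; [now exists (up (y * INR (S n))), n|].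
  replace (u / INR (S n) - y) with ((u - y * INR (S n)) * / INR (S n)) by (field; lra).
  pose proof (Rinv_0_lt_compat _ Hpos).
  rewrite Rabs_right; [|apply Rle_ge, Rmult_le_pos; lra].
  apply (Rle_lt_trans _ (1 * / INR (S n))); [|lra].
  apply Rmult_le_compat_r; lra.
Qed.

Lemma equivariant_image_invariant (psi : (R -> Prop) -> R -> Prop) (A : R -> Prop) (t : R) :
  (forall x, psi (translate A t) x <-> translate (psi A) t x) ->
  translate A t = A -> forall x, psi A x -> psi A (x + t).
Proof.
  intros Hequiv Hinv x Hx.
  rewrite <- Hinv. apply Hequiv. now exists x.
Qed.

Theorem mainTheorem1 :
  ~ exists phi : nat -> (R -> Prop) -> (R -> Prop),
      (forall i A, meager A -> is_closed (phi i A) /\ nowhere_dense (phi i A)) /\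
      (forall A, meager A -> forall x, A x -> exists i, phi i A x) /\
      (forall i A r, meager A ->
         forall x, phi i (translate A r) x <-> translate (phi i A) r x).
Proof.
  intros [phi [Hnd [Hcov Hequiv]]].
  destruct (Hcov rational rational_meager 0 rational_0) as [i H0].
  assert (Hrat : forall q, rational q -> phi i rational q).
  { intros q Hq. rewrite <- (Rplus_0_l q).
    apply (equivariant_image_invariant (phi i) rational q); auto.
    - apply Hequiv, rational_meager.
    - now apply translate_rational. }
  apply (dense_not_nowhere_dense (phi i rational)).
  - intros x eps Heps. destruct (rational_dense x eps Heps) as [q [Hq Hd]].
    exists q. auto.
  - apply (Hnd i rational rational_meager).
Qed.
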